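(* Let $q=p^m$ with $p$ an odd prime and $m\ge1$, and suppose $q\equiv 1\pmod 6$. Then the power function $f(x)=x^{q+2}$ on $\mathbb{F}_{q^2}$ satisfies $\beta_f\le 5$.
   Context: For $f:\mathbb{F}_{q^2}\to\mathbb{F}_{q^2}$ and $a,b\in\mathbb{F}_{q^2}$, $\beta_f(a,b)$ is the number of $(x,y)\in\mathbb{F}_{q^2}^2$ with $f(x)-f(y)=b$ and $f(x+a)-f(y+a)=b$; the boomerang uniformity is $\beta_f=\max_{a,b\in\mathbb{F}_{q^2}^*}\beta_f(a,b)$. *)

From mathcomp Require Import all_boot all_algebra all_field.
Set Implicit Arguments. Unset Strict Implicit. Unset Printing Implicit Defensive.
Import GRing.Theory.
Local Open Scope ring_scope.

Definition boomerang_count (F : finFieldType) (f : F -> F) (a b : F) : nat :=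
  #|[set xy : F * F | (f xy.1 - f xy.2 == b) && (f (xy.1 + a) - f (xy.2 + a) == b)]|.

Definition boomerang_uniformity (F : finFieldType) (f : F -> F) : nat :=
  \max_(ab : F * F | (ab.1 != 0) && (ab.2 != 0)) boomerang_count f ab.1 ab.2.

From mathcomp Require Import all_boot all_algebra all_field.
From mathcomp Require Import ring.
Set Implicit Arguments. Unset Strict Implicit. Unset Printing Implicit Defensive.
Import GRing.Theory.
Local Open Scope ring_scope.

(* Write [z^ := z ^+ q], an additive involution of F_{q^2}, so that
   [f z = z^ * z ^+ 2].  Subtracting the two boomerang equations gives
   [S (u + u^) + a d S^ = 0] with [S = x + y + a], [d = x - y] and
   [u = a d^]; combined with its conjugate this forces
   [S S^ ((u + u^)^2 - u u^) = 0].  The last factor would make [u / u^] a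
   primitive cube root of unity [r] with [r^ = 1 / r], whereas
   [q = 1 (mod 3)] gives [r^ = r]; hence [S = 0], i.e. [y = - x - a].  Then
   the first equation and its conjugate are a linear and a quadratic
   equation in [x^], and eliminating [x^] leaves a nonzero polynomial of
   degree 5 in [x]. *)

Lemma prime_ndvd_of_expn_mod1 (p m d : nat) :
  prime p -> (0 < m)%N -> (p ^ m %% d = 1)%N -> ~~ (p %| d)%N.
Proof.
move=> p_prime m_gt0 pm_mod1; apply/negP => p_dvd_d.
have := dvdn_exp m_gt0 (dvdnn p).
rewrite {1}(divn_eq (p ^ m) d) pm_mod1 dvdn_addr ?dvdn_mull // dvdn1 => /eqP p1.
by rewrite p1 in p_prime.
Qed.

Lemma boomerang_count_lt_size (F : finFieldType) (f : F -> F) (a b : F)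
    (P : {poly F}) (g : F -> F) :
  P != 0 ->
  (forall x y, f x - f y = b -> f (x + a) - f (y + a) = b ->
     y = g x /\ root P x) ->
  (boomerang_count f a b < size P)%N.
Proof.
move=> P_neq0 solP; set R := [set x | root P x].
apply: (@leq_ltn_trans #|[set (x, g x) | x in R]|).
  apply/subset_leq_card/subsetP => -[x y].
  rewrite inE => /andP [/eqP E1 /eqP E2]; have [-> Px] := solP x y E1 E2.
  by apply/imsetP; exists x; rewrite ?inE.
apply: leq_ltn_trans (leq_imset_card _ _) _.
rewrite cardE max_poly_roots ?enum_uniq //.
by apply/allP => x; rewrite mem_enum inE.
Qed.

(* The expansion of [x (N^2 + (N + A D)^2) - B D^2 + a (N + A D)^2] with
   [N = b - A (x + a)^2] and [D = x^2 + (x + a)^2]; in the application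
   [A] and [B] are the conjugates of [a] and [b]. *)
Definition boomerang_poly (R : nzRingType) (a A b B : R) : {poly R} :=
  Poly [:: a * b ^+ 2 - B * a ^+ 4;
           2 * b ^+ 2 - 2 * a ^+ 2 * A * b - 4 * a ^+ 3 * B + a ^+ 4 * A ^+ 2;
           4 * a ^+ 3 * A ^+ 2 - 2 * a * A * b - 8 * a ^+ 2 * B;
           6 * a ^+ 2 * A ^+ 2 - 8 * a * B;
           5 * a * A ^+ 2 - 4 * B;
           2 * A ^+ 2].

Lemma size_boomerang_poly (R : nzRingType) (a A b B : R) :
  (size (boomerang_poly a A b B) <= 6)%N.
Proof. exact: size_Poly. Qed.

Lemma boomerang_poly_neq0 (R : idomainType) (a A b B : R) :
  2 != 0 :> R -> A != 0 -> boomerang_poly a A b B != 0.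
Proof.
move=> two_neq0 A_neq0; apply/eqP => /(congr1 (coefp 5)).
rewrite /= coef_Poly coef0 => /eqP.
by rewrite mulf_eq0 expf_eq0 (negbTE two_neq0) (negbTE A_neq0).
Qed.

Section ConjugatePower.

Variables (F : fieldType) (q : nat).
Hypothesis conjD : forall x y : F, (x + y) ^+ q = x ^+ q + y ^+ q.
Hypothesis conjK : forall x : F, (x ^+ q) ^+ q = x.

Lemma conj_exp_gt0 : (0 < q)%N.
Proof.
by case: q conjK => // /(_ 0); rewrite !expr0 => /eqP; rewrite oner_eq0.
Qed.

Lemma conj0 : (0 : F) ^+ q = 0.
Proof. by rewrite expr0n eqn0Ngt conj_exp_gt0. Qed.

Lemma conj_eq0 (x : F) : (x ^+ q == 0) = (x == 0).
Proof. by rewrite expf_eq0 conj_exp_gt0. Qed.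

Lemma conjN (x : F) : (- x) ^+ q = - x ^+ q.
Proof. by apply/eqP; rewrite -subr_eq0 opprK -conjD addNr conj0. Qed.

Lemma conjB (x y : F) : (x - y) ^+ q = x ^+ q - y ^+ q.
Proof. by rewrite conjD conjN. Qed.

Lemma conj_mul_sqr (x : F) : (x ^+ q * x ^+ 2) ^+ q = x * (x ^+ q) ^+ 2.
Proof. by rewrite exprMn conjK exprAC. Qed.

Hypothesis q_mod3 : (q %% 3 = 1)%N.
Hypothesis three_neq0 : 3 != 0 :> F.

Lemma cube_root1_conj (r : F) : r ^+ 3 = 1 -> r ^+ q = r.
Proof.
by move=> r3; rewrite (divn_eq q 3) q_mod3 exprD mulnC exprM r3 expr1n mul1r.
Qed.

Lemma conj_trace_sqr_neq_norm (u : F) :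
  u != 0 -> (u + u ^+ q) ^+ 2 != u * u ^+ q.
Proof.
move=> u_neq0; apply: contra three_neq0 => /eqP uE.
have ub_neq0 : u ^+ q != 0 by rewrite conj_eq0.
set r := u / u ^+ q.
have r_neq0 : r != 0 by rewrite mulf_neq0 ?invr_eq0.
have r_quad : r ^+ 2 + r + 1 = 0.
  have -> : r ^+ 2 + r + 1 = ((u + u ^+ q) ^+ 2 - u * u ^+ q) / (u ^+ q) ^+ 2.
    by rewrite /r; field.
  by rewrite uE subrr mul0r.
have r3 : r ^+ 3 = 1.
  by apply/eqP; rewrite -subr_eq0 -(mulr0 (r - 1)) -r_quad; apply/eqP; ring.
have rV : r * r = 1.
  rewrite -{1}(cube_root1_conj r3) /r exprMn exprVn conjK.
  by rewrite mulrA divfK // divff.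
have r1 : r = 1 by rewrite -[LHS]mul1r -[in LHS]rV -expr2 -exprSr.
by rewrite -r_quad r1; apply/eqP; ring.
Qed.

Variables (a b : F).
Hypotheses (a_neq0 : a != 0) (b_neq0 : b != 0).

Lemma boomerang_sum_eq0 (x y : F) :
  x ^+ (q + 2) - y ^+ (q + 2) = b ->
  (x + a) ^+ (q + 2) - (y + a) ^+ (q + 2) = b -> x + y + a = 0.
Proof.
rewrite !exprD => E1 E2.
have E1c := congr1 (fun z => z ^+ q) E1; rewrite /= conjB !conj_mul_sqr in E1c.
have E2c := congr1 (fun z => z ^+ q) E2; rewrite /= conjB !conj_mul_sqr in E2c.
rewrite !conjD in E2 E2c.
set X := x ^+ q in E1 E2 E1c E2c; set Y := y ^+ q in E1 E2 E1c E2c.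
set A := a ^+ q in E2 E2c.
set S := x + y + a; set u := a * (X - Y).
have d_neq0 : x - y != 0.
  by apply: contraNneq b_neq0 => /subr0_eq xy; rewrite -E1 /X /Y xy subrr eqxx.
have u_neq0 : u != 0 by rewrite mulf_neq0 // /X /Y -conjB conj_eq0.
have uc : u ^+ q = A * (x - y) by rewrite exprMn conjB !conjK.
have Sc : S ^+ q = X + Y + A by rewrite !conjD.
have e1 : S * (u + u ^+ q) + a * (x - y) * S ^+ q = 0.
  transitivity ((X + A) * (x + a) ^+ 2 - (Y + A) * (y + a) ^+ 2
                - (X * x ^+ 2 - Y * y ^+ 2)).
    by rewrite uc Sc /u /S; ring.
  by rewrite E1 E2 subrr.
have e2 : S ^+ q * (u + u ^+ q) + A * (X - Y) * S = 0.
  transitivity ((x + a) * (X + A) ^+ 2 - (y + a) * (Y + A) ^+ 2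
                - (x * X ^+ 2 - y * Y ^+ 2)).
    by rewrite uc Sc /u /S; ring.
  by rewrite E1c E2c subrr.
have : S * S ^+ q * ((u + u ^+ q) ^+ 2 - u * u ^+ q) = 0.
  transitivity ((S * (u + u ^+ q) + a * (x - y) * S ^+ q)
                  * (S ^+ q * (u + u ^+ q))
                - a * (x - y) * S ^+ q
                  * (S ^+ q * (u + u ^+ q) + A * (X - Y) * S)).
    by rewrite uc /u; ring.
  by rewrite e1 e2; ring.
move/eqP; rewrite !mulf_eq0 conj_eq0 orbb subr_eq0.
by rewrite (negbTE (conj_trace_sqr_neq_norm u_neq0)) orbF => /eqP.
Qed.

Lemma boomerang_poly_root (x : F) :
  x ^+ (q + 2) - (- x - a) ^+ (q + 2) = b ->
  root (boomerang_poly a (a ^+ q) b (b ^+ q)) x.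
Proof.
rewrite !exprD => E.
have Ec := congr1 (fun z => z ^+ q) E.
rewrite /= conjB !conj_mul_sqr conjB conjN in Ec; rewrite conjB conjN in E.
set X := x ^+ q in E Ec; set A := a ^+ q in E Ec *; set B := b ^+ q in Ec *.
set D := x ^+ 2 + (x + a) ^+ 2.
have XD : X * D = b - A * (x + a) ^+ 2 by rewrite -E /D; ring.
have XcD : x * (X ^+ 2 + (X + A) ^+ 2) - B + a * (X + A) ^+ 2 = 0.
  by rewrite -Ec; ring.
apply/rootP; rewrite horner_Poly /=.
transitivity (D ^+ 2 * (x * (X ^+ 2 + (X + A) ^+ 2) - B + a * (X + A) ^+ 2)).
  have -> : D ^+ 2 * (x * (X ^+ 2 + (X + A) ^+ 2) - B + a * (X + A) ^+ 2)
    = x * ((X * D) ^+ 2 + (X * D + A * D) ^+ 2) - B * D ^+ 2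
      + a * (X * D + A * D) ^+ 2 by ring.
  by rewrite XD /D; ring.
by rewrite XcD mulr0.
Qed.

Lemma boomerang_solution (x y : F) :
  x ^+ (q + 2) - y ^+ (q + 2) = b ->
  (x + a) ^+ (q + 2) - (y + a) ^+ (q + 2) = b ->
  y = - x - a /\ root (boomerang_poly a (a ^+ q) b (b ^+ q)) x.
Proof.
move=> E1 E2; have y_def : y = - x - a.
  by apply/eqP; rewrite -subr_eq0 -(boomerang_sum_eq0 E1 E2); apply/eqP; ring.
by split=> //; apply: boomerang_poly_root; rewrite -y_def.
Qed.

End ConjugatePower.

Theorem proposition7 (p m : nat) (F : finFieldType) :
  prime p -> odd p -> (0 < m)%N ->
  ((p ^ m) %% 6 = 1)%N ->
  #|F| = ((p ^ m) ^ 2)%N ->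
  (boomerang_uniformity (fun x : F => x ^+ (p ^ m + 2)%N) <= 5)%N.
Proof.
move=> p_prime _ m_gt0 q_mod6 cardF.
have charF : p \in [pchar F].
  by apply: (card_finPcharP (n := (m * 2)%N)); rewrite // cardF expnM.
have p_ndvd6 := prime_ndvd_of_expn_mod1 p_prime m_gt0 q_mod6.
have [two_neq0 three_neq0] : 2 != 0 :> F /\ 3 != 0 :> F.
  by split; rewrite -(dvdn_pcharf charF);
    apply: contra p_ndvd6 => /dvdn_trans; apply.
have q_mod3 : (p ^ m %% 3 = 1)%N.
  by rewrite -(modn_dvdm _ (isT : (3 %| 6)%N)) q_mod6.
have conjD (x y : F) : (x + y) ^+ (p ^ m) = x ^+ (p ^ m) + y ^+ (p ^ m).
  by apply: exprDn_pchar; rewrite pnatX (pnatE _ p_prime) charF.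
have conjK (x : F) : (x ^+ (p ^ m)) ^+ (p ^ m) = x.
  by rewrite -exprM mulnn -cardF expf_card.
apply/bigmax_leqP => -[a b] /andP [/= a_neq0 b_neq0].
have P_size := size_boomerang_poly a (a ^+ (p ^ m)) b (b ^+ (p ^ m)).
rewrite -ltnS (leq_trans _ P_size) //.
apply: (boomerang_count_lt_size (f := fun x : F => x ^+ (p ^ m + 2))
                                (g := fun x => - x - a)).
  by rewrite boomerang_poly_neq0 ?expf_neq0.
move=> x y E1 E2.
exact: (boomerang_solution conjD conjK q_mod3 three_neq0 a_neq0 b_neq0 E1 E2).
Qed.
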